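(* Let $\beta>0$ and let $L:(0,\infty)\to(0,\infty)$ be slowly varying at $\infty$ with $n\mapsto L(e^n)$ ultimately monotonically increasing. For all sufficiently large $y$ define $\tilde g_1^*(y)=\frac{1}{2\beta}\log L(e^{2n-2})$, where $n\ge2$ is the integer with $n-1+\frac{1}{2\beta}\log L(e^{2n-2})\le y<n+\frac{1}{2\beta}\log L(e^{2n})$. Then for any $A>0$, \[ \tilde g_1^*(\log Ax)-\tilde g_1^*(\log x)\to0\qquad\text{as } x\to\infty. \] *)

From Stdlib Require Import Reals Lra ClassicalEpsilon.
From Coquelicot Require Import Coquelicot.
Open Scope R_scope.

Definition slowly_varying (L : R -> R) : Prop :=
  forall lam : R, 0 < lam ->
    is_lim (fun x => L (lam * x) / L x) p_infty (Finite 1).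

Definition ult_incr_exp (L : R -> R) : Prop :=
  exists N : nat, forall n : nat, (N <= n)%nat ->
    L (exp (INR n)) <= L (exp (INR (S n))).

Definition in_block (beta : R) (L : R -> R) (y : R) (n : nat) : Prop :=
  (2 <= n)%nat /\
  INR n - 1 + / (2 * beta) * ln (L (exp (2 * INR n - 2))) <= y /\
  y < INR n + / (2 * beta) * ln (L (exp (2 * INR n))).

(* the integer n of the definition (chosen by Hilbert's epsilon; for all
   sufficiently large y it exists and is unique) *)
Definition block_index (beta : R) (L : R -> R) (y : R) : nat :=
  epsilon (inhabits 0%nat) (in_block beta L y).

Definition gt1 (beta : R) (L : R -> R) (y : R) : R :=
  / (2 * beta) * ln (L (exp (2 * INR (block_index beta L y) - 2))).

From Stdlib Require Import Reals Arith Lra Lia ClassicalEpsilon.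
From Coquelicot Require Import Coquelicot.
Open Scope R_scope.

(* With h k := (1/(2 beta)) log L(e^(2k)), the points k + h k cut the half-line into the
   blocks [k + h k, k+1 + h(k+1)), and g~ is h(k) on the k-th block.  Since h is
   eventually nondecreasing, the left endpoints grow by at least 1 per block, so y and
   y + log A lie at most about |log A| + 1 blocks apart; slow variation of L makes the
   increments h(k+1) - h k tend to 0, so over boundedly many blocks h moves by o(1). *)

Definition on_step (h : nat -> R) (y : R) (p : nat) : Prop :=
  INR p + h p <= y < INR (S p) + h (S p).

Lemma nat_above (r : R) : exists n : nat, r < INR n.
Proof.
  destruct (INR_archimed 1 r) as [n hn]; [lra|].
  exists n. lra.
Qed.

Lemma on_step_index_large (h : nat -> R) (M : nat) :
  exists Y, forall y p, Y <= y -> on_step h y p -> (M <= p)%nat.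
Proof.
  assert (bound : exists B, forall n, (n <= M)%nat -> INR n + h n <= B).
  { induction M as [|M [B hB]].
    - exists (INR 0 + h 0%nat). intros n hn. replace n with 0%nat by lia. lra.
    - exists (Rmax B (INR (S M) + h (S M))). intros n hn.
      destruct (Nat.eq_dec n (S M)) as [->|hne]; [apply Rmax_r|].
      eapply Rle_trans; [apply hB; lia|apply Rmax_l]. }
  destruct bound as [B hB]. exists B. intros y p hy [_ hp].
  destruct (le_lt_dec M p) as [hMp|hpM]; [exact hMp|].
  specialize (hB (S p) hpM). lra.
Qed.

Section EventuallyNondecreasing.

Variables (h : nat -> R) (N : nat).
Hypothesis h_mono : forall k, (N <= k)%nat -> h k <= h (S k).

Lemma h_le (i j : nat) : (N <= i)%nat -> (i <= j)%nat -> h i <= h j.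
Proof.
  intros hi hij. induction hij as [|j hij IH]; [lra|].
  eapply Rle_trans; [exact IH|]. apply h_mono. lia.
Qed.

Lemma on_step_exists (M : nat) :
  exists Y, forall y, Y <= y -> exists p, (M <= p)%nat /\ on_step h y p.
Proof.
  set (K := Nat.max N M).
  exists (INR K + h K). intros y hy.
  assert (search : forall m, y < INR (K + m) + h (K + m) ->
            exists p, (K <= p)%nat /\ on_step h y p).
  { induction m as [|m IH]; intro hm.
    - rewrite Nat.add_0_r in hm. lra.
    - destruct (Rlt_or_le y (INR (K + m) + h (K + m))) as [hlt|hge]; [exact (IH hlt)|].
      exists (K + m)%nat. split; [lia|].
      split; [exact hge|]. rewrite <- Nat.add_succ_r. exact hm. }
  destruct (nat_above (y - h K)) as [m hm].
  assert (h K <= h (K + m)) by (apply h_le; lia).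
  assert (INR m <= INR (K + m)) by (apply le_INR; lia).
  destruct (search m) as [p [hKp hp]]; [lra|].
  exists p. split; [lia|exact hp].
Qed.

(* Each block raises the left endpoint k + h k by at least 1. *)
Lemma on_step_gap (y y' : R) (p q : nat) :
  (N <= p)%nat -> (p <= q)%nat -> on_step h y p -> on_step h y' q ->
  INR q - INR p < 1 + Rabs (y' - y).
Proof.
  intros hp hpq [_ hy] [hy' _].
  pose proof (Rle_abs (y' - y)) as habs.
  destruct (Nat.eq_dec p q) as [->|hne]; [pose proof (Rabs_pos (y' - y)); lra|].
  assert (h (S p) <= h q) by (apply h_le; lia).
  rewrite S_INR in hy. lra.
Qed.

Hypothesis h_steps : is_lim_seq (fun k => h (S k) - h k) 0.

Lemma h_increment_small (eps : R) (D : nat) : 0 < eps ->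
  exists K, forall i j, (K <= i)%nat -> (i <= j <= i + D)%nat -> h j - h i < eps.
Proof.
  intro heps.
  assert (hD : 0 < INR D + 1) by (pose proof (pos_INR D); lra).
  set (delta := eps / (INR D + 1)).
  assert (hdelta : 0 < delta) by (apply Rdiv_lt_0_compat; lra).
  destruct (proj2 (is_lim_seq_spec _ _) h_steps (mkposreal _ hdelta)) as [K hK].
  exists K. intros i j hi [hij hjD].
  assert (telescope : forall j, (i <= j)%nat -> h j - h i <= INR (j - i) * delta).
  { intros j' hij'. induction hij' as [|j' hij' IH].
    - rewrite Nat.sub_diag. simpl. lra.
    - specialize (hK j' ltac:(lia)). simpl in hK.
      pose proof (Rle_abs (h (S j') - h j' - 0)).
      rewrite Nat.sub_succ_l, S_INR by exact hij'. lra. }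
  assert (INR (j - i) <= INR D) by (apply le_INR; lia).
  assert (INR D * delta < eps).
  { unfold delta. apply (Rmult_lt_reg_r (INR D + 1)); [exact hD|]. field_simplify; lra. }
  specialize (telescope j hij). nra.
Qed.

Theorem on_step_value_shift (a eps : R) : 0 < eps ->
  exists Y, forall y p q, Y <= y -> on_step h y p -> on_step h (y + a) q ->
    Rabs (h q - h p) < eps.
Proof.
  intro heps.
  destruct (nat_above (1 + Rabs a)) as [D hD].
  destruct (h_increment_small eps D heps) as [K hK].
  destruct (on_step_index_large h (Nat.max N K)) as [Y hY].
  assert (close : forall z z' p q, (Nat.max N K <= p <= q)%nat ->
            on_step h z p -> on_step h z' q -> Rabs (z' - z) <= Rabs a ->
            Rabs (h q - h p) < eps).
  { intros z z' p q [hp hpq] hz hz' hzz.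
    pose proof (on_step_gap z z' p q ltac:(lia) hpq hz hz') as hgap.
    assert (INR (q - p) < INR D) by (rewrite minus_INR by exact hpq; lra).
    assert (hqD : (q - p < D)%nat) by (apply INR_lt; assumption).
    assert (h p <= h q) by (apply h_le; lia).
    specialize (hK p q ltac:(lia) ltac:(lia)).
    rewrite Rabs_right; lra. }
  exists (Y + Rabs a). intros y p q hy hp hq.
  pose proof (Rle_abs a). pose proof (Rle_abs (- a)). rewrite Rabs_Ropp in *.
  assert (hpl := hY y p ltac:(lra) hp).
  assert (hql := hY (y + a) q ltac:(lra) hq).
  destruct (le_lt_dec p q) as [hpq|hqp].
  - apply (close y (y + a)); [lia|exact hp|exact hq|].
    replace (y + a - y) with a by ring. lra.
  - rewrite Rabs_minus_sym. apply (close (y + a) y); [lia|exact hq|exact hp|].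
    replace (y - (y + a)) with (- a) by ring. rewrite Rabs_Ropp. lra.
Qed.

End EventuallyNondecreasing.

Definition block_level (beta : R) (L : R -> R) (k : nat) : R :=
  / (2 * beta) * ln (L (exp (2 * INR k))).

Lemma block_level_nondecr (beta : R) (L : R -> R) :
  0 < beta -> (forall x, 0 < x -> 0 < L x) -> ult_incr_exp L ->
  exists N, forall k, (N <= k)%nat -> block_level beta L k <= block_level beta L (S k).
Proof.
  intros hbeta hLpos [N hN]. exists N. intros k hk.
  unfold block_level. apply Rmult_le_compat_l; [apply Rlt_le, Rinv_0_lt_compat; lra|].
  apply ln_le; [apply hLpos, exp_pos|].
  replace (2 * INR k) with (INR (2 * k)) by (rewrite mult_INR; simpl; ring).
  replace (2 * INR (S k)) with (INR (S (S (2 * k)))) by (rewrite !S_INR, mult_INR; simpl; ring).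
  eapply Rle_trans; apply hN; lia.
Qed.

(* The increment is (1/(2 beta)) log (L(e^2 x) / L x) at x = e^(2k). *)
Lemma block_level_steps_vanish (beta : R) (L : R -> R) :
  (forall x, 0 < x -> 0 < L x) -> slowly_varying L ->
  is_lim_seq (fun k => block_level beta L (S k) - block_level beta L k) 0.
Proof.
  intros hLpos hLsv.
  set (ratio := fun x => L (exp 2 * x) / L x).
  assert (hgrid : is_lim_seq (fun k => exp (2 * INR k)) p_infty).
  { apply (is_lim_seq_le_p_loc INR); [|exact is_lim_seq_INR].
    exists 0%nat. intros k _. pose proof (exp_ineq1_le (2 * INR k)). pose proof (pos_INR k). lra. }
  assert (hratio : is_lim_seq (fun k => ratio (exp (2 * INR k))) 1).
  { apply (is_lim_comp_seq ratio _ p_infty); [exact (hLsv _ (exp_pos 2))| |exact hgrid].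
    exists 0%nat. intros k _. discriminate. }
  assert (hlog : is_lim_seq (fun k => ln (ratio (exp (2 * INR k)))) 0).
  { rewrite <- ln_1. eapply filterlim_comp; [exact hratio|apply continuous_ln; lra]. }
  apply (is_lim_seq_scal_l _ (/ (2 * beta))) in hlog. rewrite Rbar_mult_0_r in hlog.
  refine (is_lim_seq_ext _ _ _ _ hlog). intro k. simpl.
  unfold ratio, block_level.
  rewrite <- exp_plus, ln_div by apply hLpos, exp_pos.
  replace (2 + 2 * INR k) with (2 * INR (S k)) by (rewrite S_INR; ring).
  ring.
Qed.

Lemma in_block_succ (beta : R) (L : R -> R) (y : R) (p : nat) :
  in_block beta L y (S p) <-> (1 <= p)%nat /\ on_step (block_level beta L) y p.
Proof.
  unfold in_block, on_step, block_level.
  replace (2 * INR (S p) - 2) with (2 * INR p) by (rewrite S_INR; ring).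
  rewrite S_INR. split; intros [h1 [h2 h3]]; repeat split; try lia; lra.
Qed.

Lemma gt1_on_step (beta : R) (L : R -> R) (y : R) (p : nat) :
  (1 <= p)%nat -> on_step (block_level beta L) y p ->
  exists p', on_step (block_level beta L) y p' /\ gt1 beta L y = block_level beta L p'.
Proof.
  intros hp hstep.
  assert (hex : exists n, in_block beta L y n) by (exists (S p); apply in_block_succ; auto).
  pose proof (epsilon_spec (inhabits 0%nat) (in_block beta L y) hex) as hspec.
  fold (block_index beta L y) in hspec. unfold gt1.
  destruct (block_index beta L y) as [|p'].
  - destruct hspec as [h0 _]. lia.
  - apply in_block_succ in hspec. exists p'. split; [apply hspec|].
    unfold block_level. replace (2 * INR (S p') - 2) with (2 * INR p') by (rewrite S_INR; ring).
    reflexivity.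
Qed.

Theorem lemmaA2 (beta : R) (L : R -> R)
  (hbeta : 0 < beta)
  (hLpos : forall x : R, 0 < x -> 0 < L x)
  (hLsv : slowly_varying L)
  (hLinc : ult_incr_exp L)
  (A : R) (hA : 0 < A) :
  is_lim (fun x => gt1 beta L (ln (A * x)) - gt1 beta L (ln x)) p_infty (Finite 0).
Proof.
  set (h := block_level beta L).
  destruct (block_level_nondecr beta L hbeta hLpos hLinc) as [N hmono].
  pose proof (block_level_steps_vanish beta L hLpos hLsv) as hsteps.
  apply is_lim_spec. intro eps.
  destruct (on_step_value_shift h N hmono hsteps (ln A) eps (cond_pos eps)) as [Y hY].
  destruct (on_step_exists h N hmono 1) as [Y1 hY1].
  exists (exp (Rmax Y Y1 + Rabs (ln A))). intros x hx.
  assert (hx0 : 0 < x) by (pose proof (exp_pos (Rmax Y Y1 + Rabs (ln A))); lra).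
  assert (hlnx : Rmax Y Y1 + Rabs (ln A) < ln x).
  { rewrite <- (ln_exp (_ + _)). apply ln_increasing; [apply exp_pos|exact hx]. }
  pose proof (Rmax_l Y Y1). pose proof (Rmax_r Y Y1).
  pose proof (Rle_abs (ln A)). pose proof (Rle_abs (- ln A)). rewrite Rabs_Ropp in *.
  rewrite ln_mult, Rplus_comm, Rminus_0_r by assumption.
  destruct (hY1 (ln x) ltac:(lra)) as [p0 [hp0 hstep0]].
  destruct (hY1 (ln x + ln A) ltac:(lra)) as [q0 [hq0 hstepq0]].
  destruct (gt1_on_step beta L _ _ hp0 hstep0) as [p [hp ->]].
  destruct (gt1_on_step beta L _ _ hq0 hstepq0) as [q [hq ->]].
  apply (hY (ln x)); [lra|exact hp|exact hq].
Qed.
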